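(* Let $X$ be a real topological vector space, let $C$ be a convex subset of $X$, and let $f:X\times X\to\mathbb{R}$ be a bifunction such that $f(x,\cdot)$ is quasi-convex for each $x\in X$. If $f$ is cyclically quasi-monotone on $C$, then $f$ is properly quasi-monotone on $C$.
   Context: A function $h:X\to\mathbb{R}$ is quasi-convex if all its sublevel sets $\{x: h(x)\leq\lambda\}$ are convex. The bifunction $f$ is cyclically quasi-monotone on $C$ if for every $n\in\mathbb{N}$ and all $x_0,\dots,x_n\in C$ there is $i\in\{0,\dots,n\}$ with $f(x_i,x_{i+1})\leq0$, where $x_{n+1}:=x_0$. It is properly quasi-monotone on $C$ if for every finite non-empty $A\subset C$ and every $x\in\operatorname{co}(A)$ one has $\min_{a\in A}f(a,x)\leq0$. *)

From HB Require Import structures.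
From mathcomp Require Import all_boot all_order all_algebra.
From mathcomp Require Import all_classical all_reals.
From mathcomp Require Import topology tvs.
Set Implicit Arguments. Unset Strict Implicit. Unset Printing Implicit Defensive.
Import Order.TTheory GRing.Theory Num.Theory.
Local Open Scope classical_set_scope.
Local Open Scope ring_scope.

Section Defs.
Variables (R : realType) (X : topologicalLmodType R).

Definition convex (A : set X) : Prop :=
  forall x y (t : R), 0 <= t -> t <= 1 -> A x -> A y -> A (t *: x + (1 - t) *: y).

Definition co (A : set X) : set X :=
  fun x => forall B : set X, convex B -> A `<=` B -> B x.

Definition quasi_convex (h : X -> R) : Prop :=
  forall lam : R, convex [set x | h x <= lam].

Definition cyclically_quasi_monotone (f : X -> X -> R) (C : set X) : Prop :=
  forall (n : nat) (x : nat -> X), (forall i, (i <= n)%N -> C (x i)) ->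
    exists2 i, (i <= n)%N & f (x i) (x (if i == n then 0%N else i.+1)) <= 0.

(* proper quasi-monotonicity on C: min_{a in A} f(a,x) <= 0, i.e. some a in A
   has f(a,x) <= 0 (A finite and non-empty, so the min is attained). *)
Definition properly_quasi_monotone (f : X -> X -> R) (C : set X) : Prop :=
  forall A : set X, finite_set A -> A !=set0 -> A `<=` C ->
    forall x, co A x -> exists2 a, A a & f a x <= 0.

End Defs.

From HB Require Import structures.
From mathcomp Require Import all_boot all_order all_algebra.
From mathcomp Require Import all_classical all_reals.
From mathcomp Require Import topology tvs.
From mathcomp Require Import zify.
Import Order.TTheory GRing.Theory Num.Theory.
Local Open Scope classical_set_scope.
Local Open Scope ring_scope.

(* Cyclic quasi-monotonicity says that the relation [0 < f a b] has no cycle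
   in C, so on a finite non-empty A it has a sink a: f a b <= 0 for all b in A.
   The sublevel set {y | f a y <= 0} is convex and contains A, hence co A. *)

Lemma iter_in_seq_repeats (T : eqType) (s : seq T) (g : T -> T) (x0 : T) :
  {in s, forall x, g x \in s} -> x0 \in s ->
  exists i j, (i < j)%N /\ iter i g x0 = iter j g x0.
Proof.
move=> gs x0s; have iter_in i : iter i g x0 \in s.
  by elim: i => [|i IH] //=; apply: gs.
pose orbit := mkseq (fun i => iter i g x0) (size s).+1.
have : ~~ uniq orbit.
  apply/negP => /uniq_leq_size orbit_le.
  have : (size orbit <= size s)%N by apply: orbit_le => _ /mapP[i _ ->].
  by rewrite size_mkseq ltnn.
case/(uniqPn x0) => i [j [ij]]; rewrite size_mkseq => jlt.
by rewrite !nth_mkseq ?(ltn_trans ij jlt) //; exists i, j.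
Qed.

Lemma cycle_free_sink (T : eqType) (s : seq T) (r : T -> T -> Prop) :
  (forall n (y : nat -> T), (forall i, (i <= n)%N -> y i \in s) ->
     exists2 i, (i <= n)%N & ~ r (y i) (y (if i == n then 0%N else i.+1))) ->
  forall x0, x0 \in s -> exists2 a, a \in s & {in s, forall b, ~ r a b}.
Proof.
move=> cycle_free x0 x0s; apply: contrapT => no_sink.
have succ a : exists b, a \in s -> b \in s /\ r a b.
  have [as_|] := boolP (a \in s); last by exists a.
  apply: contrapT => no_succ; apply: no_sink; exists a => // b bs rab.
  by apply: no_succ; exists b.
have [g gP] := choice succ.
have iter_in i : iter i g x0 \in s.
  by elim: i => [|i IH] //=; have [] := gP _ IH.
have [i [j [ij loop]]] :=
  @iter_in_seq_repeats _ s g x0 (fun a as_ => (gP a as_).1) x0s.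
pose y k := iter (i + k) g x0.
have [k _] := cycle_free (j - i.+1)%N y (fun k _ => iter_in _); apply.
(* the path y closes up because y (j - i.+1) is the iterate just before y 0 *)
have -> : y (if k == (j - i.+1)%N then 0%N else k.+1) = g (y k).
  case: eqP => [->|_]; last by rewrite /y addnS.
  by rewrite /y addn0 loop -iterS; congr iter; lia.
exact: (gP _ (iter_in _)).2.
Qed.

Lemma cyclically_quasi_monotone_sink (R : realType) (X : topologicalLmodType R)
    (C : set X) (f : X -> X -> R) (s : seq X) :
  cyclically_quasi_monotone f C -> [set` s] `<=` C -> [set` s] !=set0 ->
  exists2 a, a \in s & [set` s] `<=` [set b | f a b <= 0].
Proof.
move=> cqm sC [a0 a0s].
have [a as_ sink] : exists2 a, a \in s & {in s, forall b, ~ 0 < f a b}.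
  apply: (@cycle_free_sink _ s (fun a b => 0 < f a b) _ a0 a0s) => n y ys.
  have [i ilen fle] := cqm n y (fun i ilen => sC _ (ys i ilen)).
  by exists i => //; rewrite ltNge fle.
by exists a => // b /= bs; rewrite leNgt; apply/negP; apply: sink.
Qed.

Theorem proposition3p3 (R : realType) (X : topologicalLmodType R) (C : set X)
    (f : X -> X -> R) :
  convex C ->
  (forall x : X, quasi_convex (f x)) ->
  cyclically_quasi_monotone f C ->
  properly_quasi_monotone f C.
Proof.
move=> _ qc cqm A /finite_seqP[s ->] s_ne sC x cox.
have [a as_ sub_sublevel] :=
  @cyclically_quasi_monotone_sink _ _ C f s cqm sC s_ne.
by exists a => //; apply: cox sub_sublevel; apply: qc.
Qed.
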